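(* Let $K$ be a field and let $\Delta$ be a simplicial complex on the vertex set $V\cup V'$, where $V\cap V'=\emptyset$ and $|V|=|V'|=n$. Suppose that the set $G=\{F\in\mathcal F(\Delta): F\cap V\neq\emptyset,\ F\cap V'\neq\emptyset\}$ is a Cohen--Macaulay bipartite graph (with bipartition $V,V'$) with no isolated vertex. Fix a labeling $V=\{x_1,\dots,x_n\}$, $V'=\{y_1,\dots,y_n\}$ and a partial order $\le$ on $V$ such that $\{x_i,y_j\}$ is an edge of $G$ if and only if $x_i\le x_j$, and let $\mathcal L(G)$ be the distributive lattice of all poset ideals of $(V,\le)$. Then the following are equivalent: (1) $\Delta$ is unmixed, and all minimal vertex covers of $\Delta$ have cardinality $|V|$; (2) there exists a segment $\mathcal S\subseteq\mathcal L(G)$ such that $H_{\mathcal S}^*=I(\Delta)$.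
   Context: $\mathcal F(\Delta)$ denotes the set of facets of $\Delta$. A vertex cover of $\Delta$ is a set of vertices meeting every facet; it is minimal if no proper subset is a vertex cover; $\Delta$ is unmixed if all minimal vertex covers have the same cardinality. Identify vertices with variables of $S=K[x_1,\dots,x_n,y_1,\dots,y_n]$. The facet ideal is $I(\Delta)=(\prod_{v\in F}v : F\in\mathcal F(\Delta))$; for a graph $G$, $I(G)$ is its edge ideal (generated by $uv$ for edges $\{u,v\}$), and $G$ is Cohen--Macaulay if $S/I(G)$ is Cohen--Macaulay (for such $G$ a labeling and partial order as in the claim always exist). $\mathcal L(G)$ consists of all poset ideals of $(V,\le)$ (including $\emptyset$), ordered by inclusion. For $\alpha\in\mathcal L(G)$ put $u_\alpha=\prod_{x_i\in\alpha}x_i\prod_{x_i\notin\alpha}y_i$, and for a subset $\mathcal S\subseteq\mathcal L(G)$ let $H_{\mathcal S}$ be the ideal of $S$ generated by $\{u_\alpha:\alpha\in\mathcal S\}$. A subset $\mathcal S$ of a lattice is a segment if for all $p,q\in\mathcal S$ with $p\le q$ the interval $[p,q]=\{r: p\le r\le q\}$ is contained in $\mathcal S$. For a squarefree monomial ideal $I=I_\Gamma$ (Stanley--Reisner ideal of a simplicial complex $\Gamma$ on the vertex set $W=V\cup V'$), $I^*:=I_{\Gamma^\vee}$, where $\Gamma^\vee=\{W\setminus F: F\notin\Gamma\}$ is the Alexander dual. *)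

From HB Require Import structures.
From mathcomp Require Import all_boot all_order all_algebra.
From mathcomp Require Import mpoly.

Set Implicit Arguments.
Unset Strict Implicit.
Unset Printing Implicit Defensive.

Import GRing.Theory.
Local Open Scope ring_scope.

Definition simplicial_complex (m : nat) (D : {set {set 'I_m}}) : Prop :=
  forall F G : {set 'I_m}, F \in D -> G \subset F -> G \in D.

Definition facets (m : nat) (D : {set {set 'I_m}}) : {set {set 'I_m}} :=
  [set F in D | [forall G in D, (F \subset G) ==> (G == F)]].

Definition vertex_cover (m : nat) (D : {set {set 'I_m}}) (C : {set 'I_m}) : Prop :=
  forall F, F \in facets D -> ~~ [disjoint C & F].

Definition minimal_vertex_cover (m : nat) (D : {set {set 'I_m}}) (C : {set 'I_m}) : Prop :=
  vertex_cover D C /\ forall C' : {set 'I_m}, C' \proper C -> ~ vertex_cover D C'.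

Definition unmixed (m : nat) (D : {set {set 'I_m}}) : Prop :=
  forall C1 C2, minimal_vertex_cover D C1 -> minimal_vertex_cover D C2 ->
    #|C1| = #|C2|.

Definition sqmono (K : fieldType) (m : nat) (A : {set 'I_m}) : {mpoly K[m]} :=
  \prod_(v in A) 'X_v.

Definition mono_ideal (K : fieldType) (m : nat) (Gs : {set {set 'I_m}})
  (p : {mpoly K[m]}) : Prop :=
  exists f : {set 'I_m} -> {mpoly K[m]}, p = \sum_(A in Gs) f A * @sqmono K m A.

Definition facet_ideal (K : fieldType) (m : nat) (D : {set {set 'I_m}}) :=
  @mono_ideal K m (facets D).

Definition SR_ideal (K : fieldType) (m : nat) (Gam : {set {set 'I_m}}) :=
  @mono_ideal K m (~: Gam).

Definition alexander_dual (m : nat) (Gam : {set {set 'I_m}}) : {set {set 'I_m}} :=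
  [set ~: F | F in ~: Gam].

Definition partial_order (n : nat) (le : rel 'I_n) : Prop :=
  reflexive le /\ antisymmetric le /\ transitive le.

Definition poset_ideal (n : nat) (le : rel 'I_n) (a : {set 'I_n}) : Prop :=
  forall i j, le i j -> j \in a -> i \in a.

Definition segment (n : nat) (le : rel 'I_n) (S : {set {set 'I_n}}) : Prop :=
  (forall a, a \in S -> poset_ideal le a) /\
  forall p q r, p \in S -> q \in S -> p \subset q ->
    poset_ideal le r -> p \subset r -> r \subset q -> r \in S.

Definition xv (n : nat) (i : 'I_n) : 'I_(n + n) := lshift n i.
Definition yv (n : nat) (i : 'I_n) : 'I_(n + n) := rshift n i.

Definition Vset (n : nat) : {set 'I_(n + n)} := [set xv i | i : 'I_n].
Definition V'set (n : nat) : {set 'I_(n + n)} := [set yv i | i : 'I_n].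

(* support of u_alpha = prod_{x_i in alpha} x_i prod_{x_i notin alpha} y_i *)
Definition u_supp (n : nat) (a : {set 'I_n}) : {set 'I_(n + n)} :=
  [set xv i | i in a] :|: [set yv i | i in ~: a].

Definition H_gens (n : nat) (S : {set {set 'I_n}}) : {set {set 'I_(n + n)}} :=
  [set u_supp a | a in S].

Definition H_ideal (K : fieldType) (n : nat) (S : {set {set 'I_n}}) :=
  @mono_ideal K (n + n) (H_gens S).

From HB Require Import structures.
From mathcomp Require Import all_boot all_order all_algebra.
From mathcomp Require Import mpoly.

(* A squarefree monomial ideal contains another iff every generator of the
   second is divisible by a generator of the first.  Hence H_S = I_Gam forces
   Gam to be the complex of sets containing no supp u_a (a in S), the
   non-faces of its Alexander dual are the transversals of the supp u_a, and
   H_S^* = I(Delta) says that the vertex covers of Delta are exactly the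
   supersets of the supp u_a; so every minimal vertex cover is some supp u_a
   and has n elements.  Conversely, I(Delta) is always the Alexander dual of
   the ideal generated by the minimal vertex covers.  As every {x_i, y_i} is a
   facet, a vertex cover C contains supp u_a for a = {i | x_i in C}, so the
   minimal covers of size n are all of this form, and these a form a segment
   of L(G). *)

Set Implicit Arguments.
Unset Strict Implicit.
Unset Printing Implicit Defensive.
Import GRing.Theory.

Lemma not_disjointP (T : finType) (A B : {pred T}) :
  reflect (exists2 x, x \in A & x \in B) (~~ [disjoint A & B]).
Proof.
apply: (iffP pred0Pn) => [[x /andP[xA xB]] | [x xA xB]]; exists x => //.
exact/andP.
Qed.

Definition subsumed_by (T : finType) (A B : {set {set T}}) : Prop :=
  forall F, F \in A -> exists2 G, G \in B & G \subset F.

Section SquarefreeMonomialIdeals.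
Variables (K : fieldType) (m : nat).
Local Open Scope ring_scope.
Implicit Types (A B : {set {set 'I_m}}) (F G : {set 'I_m}).

Lemma sqmono_split F G : G \subset F ->
  sqmono K F = sqmono K (F :\: G) * sqmono K G.
Proof.
move=> GF; rewrite /sqmono (bigID (mem G)) /= mulrC; congr (_ * _).
  by apply: eq_bigl => v; rewrite !inE andbC.
apply: eq_bigl => v; case vG: (v \in G); rewrite ?andbT ?andbF //=.
by rewrite (subsetP GF).
Qed.

Lemma meval_sqmono F G :
  (sqmono K G).@[fun i => (i \in F)%:R] = (G \subset F)%:R.
Proof.
rewrite /sqmono rmorph_prod /=; under eq_bigr do rewrite mevalXU.
case: (boolP (G \subset F)) => [GF | /subsetPn[i iG iF]].
  by rewrite big1 // => i iG; rewrite (subsetP GF).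
by rewrite (bigD1 i) //= (negbTE iF) mul0r.
Qed.

Lemma mono_ideal_sqmono A F : F \in A -> mono_ideal A (sqmono K F).
Proof.
move=> FA; exists (fun G => (G == F)%:R).
rewrite (bigD1 F) //= eqxx mul1r big1 ?addr0 // => G /andP[_ /negbTE->].
by rewrite mul0r.
Qed.

(* Evaluating at the 0/1 indicator of a generator F of A kills every
   generator of B that does not divide F. *)
Lemma mono_ideal_subsumed A B :
  (forall p : {mpoly K[m]}, mono_ideal A p -> mono_ideal B p) <-> subsumed_by A B.
Proof.
split=> [AB F FA | AB p [f ->]].
  have [g gE] := AB _ (mono_ideal_sqmono FA).
  have := congr1 (meval (fun i => (i \in F)%:R)) gE.
  rewrite meval_sqmono subxx rmorph_sum /=.
  case: (boolP [exists G in B, G \subset F]) => [/exists_inP[G] | ]; first by exists G.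
  rewrite negb_exists_in => /forall_inP nsub.
  rewrite big1 => [/eqP | G GB]; first by rewrite oner_eq0.
  by rewrite mevalM meval_sqmono (negbTE (nsub G GB)) mulr0.
pose c F := odflt set0 [pick G in B | G \subset F].
have cP F : F \in A -> c F \in B /\ c F \subset F.
  rewrite /c => FA; case: pickP => [G /andP[] // | /= none].
  by have [G GB GF] := AB F FA; have := none G; rewrite GB GF.
exists (fun G => \sum_(F in A | c F == G) f F * sqmono K (F :\: G)).
rewrite (partition_big c (mem B)); last by move=> F /cP[].
apply: eq_bigr => G GB; rewrite mulr_suml; apply: eq_bigr => F /andP[FA /eqP<-].
by rewrite -mulrA -sqmono_split //; case: (cP F FA).
Qed.

Lemma mono_ideal_eq_subsumed A B :
  (forall p : {mpoly K[m]}, mono_ideal A p <-> mono_ideal B p) <->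
  subsumed_by A B /\ subsumed_by B A.
Proof.
rewrite -!mono_ideal_subsumed; split=> [AB | [AB BA] p].
  by split=> p /AB.
by split; [apply: AB | apply: BA].
Qed.

End SquarefreeMonomialIdeals.

Section Clutters.
Variable T : finType.
Implicit Types (B : {set {set T}}) (F : {set T}).

Definition transversals B : {set {set T}} :=
  [set C : {set T} | [forall G in B, ~~ [disjoint G & C]]].

Definition independence_complex B : {set {set T}} :=
  [set F : {set T} | [forall G in B, ~~ (G \subset F)]].

Lemma notin_independence_complex B F :
  (F \notin independence_complex B) = [exists G in B, G \subset F].
Proof. by rewrite inE negb_forall_in; apply: eq_existsb => G; rewrite negbK. Qed.

End Clutters.

Section AlexanderDuality.
Variable m : nat.
Implicit Types (Gam B : {set {set 'I_m}}).

Lemma independence_complex_simplicial B :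
  simplicial_complex (independence_complex B).
Proof.
move=> F G; rewrite !inE => /forall_inP FB GF; apply/forall_inP => H HB.
by apply: contra (FB H HB) => HG; apply: subset_trans GF.
Qed.

Lemma in_alexander_dual Gam G : (G \in alexander_dual Gam) = (~: G \notin Gam).
Proof.
apply/imsetP/idP => [[F FG ->] | GG]; first by rewrite setCK -in_setC.
by exists (~: G); rewrite ?in_setC ?setCK.
Qed.

Lemma alexander_dual_independence_complex B :
  ~: alexander_dual (independence_complex B) = transversals B.
Proof.
apply/setP => G; rewrite in_setC in_alexander_dual negbK !inE.
by apply: eq_forallb => H; rewrite disjoints_subset.
Qed.

Lemma complex_eq_independence Gam B : simplicial_complex Gam ->
  subsumed_by (~: Gam) B -> subsumed_by B (~: Gam) ->
  Gam = independence_complex B.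
Proof.
move=> scGam nfB Bnf; apply/setP => F; apply/idP/idP => [FGam | ].
  apply: contraLR FGam; rewrite notin_independence_complex => /exists_inP[G GB GF].
  have [N NGam NG] := Bnf G GB; rewrite in_setC in NGam.
  by apply: contra NGam => FGam; apply: scGam FGam (subset_trans NG GF).
apply: contraLR; rewrite -in_setC notin_independence_complex => /nfB[G GB GF].
by apply/exists_inP; exists G.
Qed.

Lemma SR_ideal_independence_complex (K : fieldType) B (p : {mpoly K[m]}) :
  SR_ideal (independence_complex B) p <-> mono_ideal B p.
Proof.
move: p; apply/mono_ideal_eq_subsumed; split=> F.
  by rewrite in_setC notin_independence_complex => /exists_inP[G]; exists G.
by move=> FB; exists F; rewrite // in_setC notin_independence_complex; apply/exists_inP; exists F.
Qed.

End AlexanderDuality.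

Section VertexCovers.
Variables (m : nat) (D : {set {set 'I_m}}).
Implicit Types (B : {set {set 'I_m}}) (C F : {set 'I_m}).

Definition vertex_coverb C := [forall F in facets D, ~~ [disjoint C & F]].

Lemma vertex_coverP C : reflect (vertex_cover D C) (vertex_coverb C).
Proof. exact: forall_inP. Qed.

Definition min_vertex_covers : {set {set 'I_m}} :=
  [set C : {set 'I_m} | minset vertex_coverb C].

Lemma min_vertex_coversP C :
  reflect (minimal_vertex_cover D C) (C \in min_vertex_covers).
Proof.
rewrite inE; apply: (iffP minsetP) => [[/vertex_coverP cC minC] | [cC minC]].
  split=> // C' ltC'C /vertex_coverP cC'.
  by move: ltC'C; rewrite properEneq => /andP[/eqP + /(minC C' cC')].
split=> [|C' /vertex_coverP cC' leC'C]; first exact/vertex_coverP.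
apply/eqP; apply: contraT => neC'C; exfalso.
by apply: (minC C'); rewrite ?properEneq ?neC'C.
Qed.

Lemma exists_minimal_vertex_cover C : vertex_cover D C ->
  exists2 C0, C0 \in min_vertex_covers & C0 \subset C.
Proof.
move/vertex_coverP/minset_exists => [C0 minC0 C0C].
by exists C0; rewrite ?inE.
Qed.

Lemma vertex_cover_pair C u v : vertex_cover D C -> [set u; v] \in facets D ->
  (u \in C) || (v \in C).
Proof.
move=> cC /cC /not_disjointP[z zC].
by rewrite !inE => /orP[] /eqP<-; rewrite zC ?orbT.
Qed.

Lemma facet_transversal_min_vertex_covers F :
  F \in facets D -> F \in transversals min_vertex_covers.
Proof.
move=> FD; rewrite inE; apply/forall_inP => C /min_vertex_coversP[cC _].
exact: cC.
Qed.

(* If the transversal X of the minimal covers contained no facet, every facet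
   would meet ~: X, so some minimal cover would lie in ~: X. *)
Lemma transversal_min_vertex_covers_facet X :
  X \in transversals min_vertex_covers -> exists2 F, F \in facets D & F \subset X.
Proof.
rewrite inE => /forall_inP meetX.
case: (boolP [exists F in facets D, F \subset X]) => [/exists_inP[F] | ]; first by exists F.
rewrite negb_exists_in => /forall_inP noF.
have cX : vertex_cover D (~: X).
  move=> F /noF /subsetPn[z zF zX]; apply/not_disjointP; exists z => //.
  by rewrite inE.
have [C0 /meetX] := exists_minimal_vertex_cover cX.
by rewrite disjoints_subset => /negP nC0X /nC0X.
Qed.

Lemma vertex_cover_subsumed B :
  subsumed_by (facets D) (transversals B) -> subsumed_by (transversals B) (facets D) ->
  forall C, vertex_cover D C <-> exists2 G, G \in B & G \subset C.
Proof.
move=> facetsB transB C; split=> [cC | [G GB GC] F FD].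
  case: (boolP [exists G in B, G \subset C]) => [/exists_inP[G] | ]; first by exists G.
  rewrite negb_exists_in => /forall_inP noG.
  have : ~: C \in transversals B.
    by rewrite inE; apply/forall_inP => G /noG; rewrite disjoints_subset setCK.
  case/transB => F /cC; rewrite disjoint_sym disjoints_subset.
  by move=> /negP nFC /nFC.
have [X] := facetsB F FD; rewrite inE => /forall_inP/(_ G GB)/not_disjointP[z zG zX] XF.
by apply/not_disjointP; exists z; [apply: (subsetP GC) | apply: (subsetP XF)].
Qed.

Lemma minimal_vertex_cover_mem B C :
  (forall C, vertex_cover D C <-> exists2 G, G \in B & G \subset C) ->
  minimal_vertex_cover D C -> C \in B.
Proof.
move=> coverE [/coverE[G GB GC] minC].
case: (eqVneq G C) => [<- // | neGC]; exfalso.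
by apply: (minC G); [rewrite properEneq neGC | apply/coverE; exists G].
Qed.

Variable K : fieldType.

Lemma facet_ideal_alexander_dual_cover_ideal (p : {mpoly K[m]}) :
  SR_ideal (alexander_dual (independence_complex min_vertex_covers)) p <->
  facet_ideal D p.
Proof.
move: p; apply/mono_ideal_eq_subsumed; rewrite alexander_dual_independence_complex.
split=> [X /transversal_min_vertex_covers_facet // | F FD].
by exists F; rewrite ?facet_transversal_min_vertex_covers.
Qed.

Lemma vertex_cover_dual_ideals Gam B : simplicial_complex Gam ->
  (forall p : {mpoly K[m]}, SR_ideal Gam p <-> mono_ideal B p) ->
  (forall p : {mpoly K[m]}, SR_ideal (alexander_dual Gam) p <-> facet_ideal D p) ->
  forall C, vertex_cover D C <-> exists2 G, G \in B & G \subset C.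
Proof.
move=> scGam /mono_ideal_eq_subsumed[GamB BGam] /mono_ideal_eq_subsumed[dualD Ddual].
have GamE := complex_eq_independence scGam GamB BGam.
rewrite GamE alexander_dual_independence_complex in dualD Ddual.
exact: vertex_cover_subsumed.
Qed.

End VertexCovers.

Section BipartiteCovers.
Variable n : nat.
Implicit Types (a p q r : {set 'I_n}) (C F : {set 'I_(n + n)}).

Variant vertex_spec : 'I_(n + n) -> Type :=
  | VertexX i : vertex_spec (xv i)
  | VertexY i : vertex_spec (yv i).

Lemma vertexP z : vertex_spec z.
Proof. by rewrite -[z]splitK; case: split => i; constructor. Qed.

Lemma xv_neq_yv (i j : 'I_n) : xv i != yv j.
Proof.
apply/eqP => /(congr1 val) /= eij.
by have := ltn_ord i; rewrite eij ltnNge leq_addr.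
Qed.

Lemma in_u_supp_x a i : (xv i \in u_supp a) = (i \in a).
Proof.
rewrite inE (mem_imset _ _ (@lshift_inj _ _)) orbC.
by case: imsetP => // -[j _ /eqP]; rewrite (negbTE (xv_neq_yv _ _)).
Qed.

Lemma in_u_supp_y a i : (yv i \in u_supp a) = (i \notin a).
Proof.
rewrite inE (mem_imset _ _ (@rshift_inj _ _)) inE.
by case: imsetP => // -[j _ /eqP]; rewrite eq_sym (negbTE (xv_neq_yv _ _)).
Qed.

Lemma card_u_supp a : #|u_supp a| = n.
Proof.
rewrite cardsU (card_imset _ (@lshift_inj _ _)) (card_imset _ (@rshift_inj _ _)).
have -> : [set xv i | i in a] :&: [set yv i | i in ~: a] = set0.
  apply/setP => z; rewrite !inE; apply/negbTE/andP => -[/imsetP[i _ ->]].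
  by case/imsetP => j _ /eqP; rewrite (negbTE (xv_neq_yv _ _)).
by rewrite cards0 subn0 cardsC card_ord.
Qed.

Lemma xv_in_Vset i : xv i \in Vset n.
Proof. exact: imset_f. Qed.

Lemma yv_in_V'set i : yv i \in V'set n.
Proof. exact: imset_f. Qed.

Lemma card_Vset : #|Vset n| = n.
Proof. by rewrite card_imset ?card_ord //; apply: lshift_inj. Qed.

Lemma meets_u_supp_in_V' F p q : [disjoint F & Vset n] ->
  ~~ [disjoint u_supp q & F] -> p \subset q -> ~~ [disjoint u_supp p & F].
Proof.
move=> FV /not_disjointP[z]; case: z / vertexP => i.
  by move=> _ /(disjointFr FV); rewrite xv_in_Vset.
rewrite in_u_supp_y => iq iF pq; apply/not_disjointP; exists (yv i) => //.
by rewrite in_u_supp_y; apply: contra iq; apply: (subsetP pq).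
Qed.

Lemma meets_u_supp_in_V F p q : [disjoint F & V'set n] ->
  ~~ [disjoint u_supp p & F] -> p \subset q -> ~~ [disjoint u_supp q & F].
Proof.
move=> FV' /not_disjointP[z]; case: z / vertexP => i; last first.
  by move=> _ /(disjointFr FV'); rewrite yv_in_V'set.
rewrite in_u_supp_x => ip iF pq; apply/not_disjointP; exists (xv i) => //.
by rewrite in_u_supp_x (subsetP pq).
Qed.

Lemma meets_u_supp_edge (le : rel 'I_n) r i j : poset_ideal le r -> le i j ->
  ~~ [disjoint u_supp r & [set xv i; yv j]].
Proof.
move=> idr lij; apply/not_disjointP; case jr: (j \in r).
  by exists (xv i); rewrite ?set21 // in_u_supp_x (idr i j).
by exists (yv j); rewrite ?set22 // in_u_supp_y jr.
Qed.

Variables (le : rel 'I_n) (Delta : {set {set 'I_(n + n)}}).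

Definition min_cover_supports : {set {set 'I_n}} :=
  [set a | u_supp a \in min_vertex_covers Delta].

Lemma mem_min_cover_supports a :
  (a \in min_cover_supports) = (u_supp a \in min_vertex_covers Delta).
Proof. exact: in_set. Qed.

Hypothesis diag_facet : forall i, [set xv i; yv i] \in facets Delta.

Lemma u_supp_x_part_subset C :
  vertex_cover Delta C -> u_supp [set i | xv i \in C] \subset C.
Proof.
move=> cC; apply/subsetP => z; case: z / vertexP => i;
  rewrite ?in_u_supp_x ?in_u_supp_y inE // => /negbTE xiC.
by have := vertex_cover_pair cC (diag_facet i); rewrite xiC.
Qed.

Lemma vertex_cover_sub_u_supp C a :
  vertex_cover Delta C -> C \subset u_supp a -> C = u_supp a.
Proof.
move=> cC Ca; apply/eqP; rewrite eqEsubset Ca; apply/subsetP => z.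
case: z / vertexP => i; rewrite ?in_u_supp_x ?in_u_supp_y => ia;
  have /orP[] // := vertex_cover_pair cC (diag_facet i);
  by move/(subsetP Ca); rewrite ?in_u_supp_x ?in_u_supp_y ?ia ?(negbTE ia).
Qed.

Lemma u_supp_min_vertex_cover a :
  vertex_cover Delta (u_supp a) -> u_supp a \in min_vertex_covers Delta.
Proof.
move=> ca; apply/min_vertex_coversP; split=> // C ltCa cC.
have CE := vertex_cover_sub_u_supp cC (proper_sub ltCa).
by rewrite CE properxx in ltCa.
Qed.

Lemma min_vertex_cover_u_supp C : C \in min_vertex_covers Delta -> #|C| = n ->
  C = u_supp [set i | xv i \in C].
Proof.
case/min_vertex_coversP => cC _ cardC; apply/esym/eqP.
by rewrite eqEcard u_supp_x_part_subset // card_u_supp cardC leqnn.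
Qed.

Hypothesis edge_facet : forall i j, le i j -> [set xv i; yv j] \in facets Delta.

Lemma vertex_cover_u_supp_ideal a :
  vertex_cover Delta (u_supp a) -> poset_ideal le a.
Proof.
move=> ca i j lij ja.
by have := vertex_cover_pair ca (edge_facet lij); rewrite in_u_supp_x in_u_supp_y ja orbF.
Qed.

Hypothesis facet_edge : forall F, F \in facets Delta ->
  ~~ [disjoint F & Vset n] -> ~~ [disjoint F & V'set n] ->
  exists i j, le i j /\ F = [set xv i; yv j].

(* Facets inside V' are met by the y-part of u_q, those inside V by the
   x-part of u_p, and the edges by u_r itself since r is a poset ideal. *)
Lemma segment_min_cover_supports :
  segment le min_cover_supports.
Proof.
split=> [a | p q r]; rewrite ?mem_min_cover_supports.
  by case/min_vertex_coversP => ca _; apply: vertex_cover_u_supp_ideal.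
move=> /min_vertex_coversP[cp _] /min_vertex_coversP[cq _] _ idr pr rq.
apply: u_supp_min_vertex_cover => F FD.
case: (boolP [disjoint F & Vset n]) => [FV | FnV].
  exact: meets_u_supp_in_V' FV (cq F FD) rq.
case: (boolP [disjoint F & V'set n]) => [FV' | FnV'].
  exact: meets_u_supp_in_V FV' (cp F FD) pr.
have [i [j [lij ->]]] := facet_edge FD FnV FnV'.
exact: meets_u_supp_edge idr lij.
Qed.

Lemma H_gens_min_vertex_covers :
  (forall C, minimal_vertex_cover Delta C -> #|C| = n) ->
  H_gens min_cover_supports = min_vertex_covers Delta.
Proof.
move=> card_min; apply/setP => C; apply/imsetP/idP => [[a] | minC].
  by rewrite mem_min_cover_supports => aC ->.
have /min_vertex_coversP/card_min cardC := minC.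
exists [set i | xv i \in C]; last exact: min_vertex_cover_u_supp.
by rewrite mem_min_cover_supports -min_vertex_cover_u_supp.
Qed.

End BipartiteCovers.

Unset Implicit Arguments.
Theorem theorem2p4 (K : fieldType) (n : nat) (le : rel 'I_n)
    (Delta : {set {set 'I_(n + n)}}) :
  partial_order le ->
  simplicial_complex Delta ->
  (* G = {facets meeting both V and V'} is the bipartite graph
     with edges {x_i, y_j} for x_i <= x_j *)
  (forall F : {set 'I_(n + n)},
      (F \in facets Delta /\ ~~ [disjoint F & Vset n] /\ ~~ [disjoint F & V'set n])
      <-> exists i j : 'I_n, le i j /\ F = [set xv i; yv j]) ->
  ((unmixed Delta /\
      forall C, minimal_vertex_cover Delta C -> #|C| = #|Vset n|)
   <->
   exists S : {set {set 'I_n}},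
     segment le S /\
     (* H_S^* = I(Delta): H_S = I_Gam for the simplicial complex Gam,
        and H_S^* := I_(Gam^vee) *)
     exists Gam : {set {set 'I_(n + n)}},
       simplicial_complex Gam /\
       (forall p, @SR_ideal K (n + n) Gam p <-> @H_ideal K n S p) /\
       (forall p, @SR_ideal K (n + n) (alexander_dual Gam) p <-> @facet_ideal K (n + n) Delta p)).
Proof.
move=> [le_refl _] _ bipartite; rewrite card_Vset.
have edge_facet i j : le i j -> [set xv i; yv j] \in facets Delta.
  by move=> lij; have [] := (bipartite _).2 (ex_intro _ i (ex_intro _ j (conj lij erefl))).
have diag_facet i : [set xv i; yv i] \in facets Delta := edge_facet i i (le_refl i).
have facet_edge F : F \in facets Delta -> ~~ [disjoint F & Vset n] ->
    ~~ [disjoint F & V'set n] -> exists i j, le i j /\ F = [set xv i; yv j].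
  by move=> FD FV FV'; apply/bipartite.
split=> [[_ card_min] | [S [_ [Gam [scGam [GamS dualD]]]]]].
- exists (min_cover_supports Delta); split.
    exact: segment_min_cover_supports diag_facet edge_facet facet_edge.
  exists (independence_complex (min_vertex_covers Delta)).
  split; first exact: independence_complex_simplicial.
  rewrite /H_ideal (H_gens_min_vertex_covers diag_facet card_min).
  split=> p; [exact: SR_ideal_independence_complex | exact: facet_ideal_alexander_dual_cover_ideal].
- have coverE := vertex_cover_dual_ideals scGam GamS dualD.
  have card_min C : minimal_vertex_cover Delta C -> #|C| = n.
    by move/(minimal_vertex_cover_mem coverE)/imsetP => [a _ ->]; rewrite card_u_supp.
  by split=> [C1 C2 /card_min-> /card_min-> | ].
Qed.
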